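(* Let $(a_i)_{i\ge1}$ be a sequence of mild signature, let $(b_i)_{i\ge1}$ be any sequence of integers, and let $A$ be the associated replacement sequence. If $\alpha$ is a real number with $\sum_{i\ge1}\|\alpha b_i\|<\infty$, then the sequence of Weyl sums $x_n=\frac1n\sum_{i=0}^{n-1}e(\alpha A(i))$ converges to some complex number as $n\to\infty$.
   Context: $e(x)=e^{2\pi i x}$ and $\|x\|$ is the distance from $x$ to the nearest integer. Greedy representation: given an increasing sequence of positive integers $(a_i)$ with $a_1=1$, the base-$a_i$ representation of $n\ge0$ is obtained by repeatedly subtracting from what remains the largest $a_i$ that is at most what remains (the same $a_i$ may be used more than once), until $0$ is reached; this writes $n$ as a sum of terms $a_i$ with multiplicities. Mild signature: $(a_i)$ is an increasing sequence of positive integers with $a_1=1$ such that (1) there is a constant $L$ such that for every $n$, greedily writing $a_n$ as a sum of terms among $a_1,\dots,a_{n-1}$ (repeatedly subtracting the largest $a_i$ with $i\le n-1$ that is at most what remains) uses only $a_{n-1},\dots,a_{n-L}$, giving $a_n=c_1a_{n-1}+\dots+c_La_{n-L}$ with integers $c_j\ge0$ (which may depend on $n$); and (2) there are $r,s>1$ with $ra_n<a_{n+1}<sa_n$ for all $n$. Replacement sequence: $A(n)$ is obtained by writing $n$ in its greedy base-$a_i$ representation and replacing each occurrence of $a_i$ by $b_i$, i.e. if $n=\sum_i m_ia_i$ greedily then $A(n)=\sum_i m_ib_i$ (so $A(0)=0$). *)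

From Stdlib Require Import Reals ZArith Arith List.
From Coquelicot Require Import Coquelicot.
Open Scope R_scope.

(* Sequences are 0-indexed: a 0 plays the role of a_1, b 0 of b_1, etc. *)

Definition e (x : R) : C := (cos (2 * PI * x), sin (2 * PI * x)).

Definition dist_int (x : R) : R := Rmin (frac_part x) (1 - frac_part x).

(* largest i < k with a i <= m (0 if none) *)
Fixpoint top_below (a : nat -> nat) (m k : nat) : nat :=
  match k with
  | O => O
  | S k' => if Nat.leb (a k') m then k' else top_below a m k'
  end.

(* Greedy representation of m using terms a i with i < k: the list of
   indices used (with multiplicity), in the order they are subtracted.
   [fuel] bounds the number of steps (fuel = m suffices as a 0 = 1). *)
Fixpoint greedy_rep (a : nat -> nat) (k fuel m : nat) : list nat :=
  match fuel with
  | O => nil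
  | S f => if Nat.eqb m 0 then nil
           else let i := top_below a m k in i :: greedy_rep a k f (m - a i)
  end.

Definition strictly_increasing (a : nat -> nat) : Prop :=
  forall n, (a n < a (S n))%nat.

Definition mild_signature (a : nat -> nat) : Prop :=
  strictly_increasing a /\ a 0%nat = 1%nat /\
  (exists L : nat, forall n : nat, (1 <= n)%nat ->
     forall j, In j (greedy_rep a n (a n) (a n)) -> (n - L <= j)%nat) /\
  (exists r s : R, 1 < r /\ 1 < s /\
     forall n, r * INR (a n) < INR (a (S n)) < s * INR (a n)).

Definition replacement (a : nat -> nat) (b : nat -> Z) (n : nat) : Z :=
  fold_right Z.add 0%Z (map b (greedy_rep a (S n) n n)).

Definition weyl_sum (A : nat -> Z) (alpha : R) (n : nat) : C :=
  Cmult (RtoC (/ INR n))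
    (fold_right Cplus (RtoC 0) (map (fun i => e (alpha * IZR (A i))) (seq 0 n))).

(* Let S(n) = sum_{m<n} e(alpha A(m)).  For a_i <= n <= a_(i+1) the greedy representation of n
   starts with a_i, so S(n) = S(a_i) + e(alpha b_i) S(n - a_i), which differs from
   S(a_i) + S(n - a_i) by at most |e(alpha b_i) - 1| (n - a_i) <= 2 pi ||alpha b_i|| (n - a_i).
   Since the greedy digits of a_j - a_(j-1) all lie among the L indices below j, the averages
   x_j = Re(c S(a_j)) / a_j (|c| <= 1) obey: if x <= M on the previous L indices, then
   x_j <= (1 - 1/s) M + x_(j-1)/s + eta_j with eta summable.  Applied to c and -c this shrinks
   the oscillation of x over consecutive windows of length L by a fixed factor, up to summable
   errors, so x_j converges and S(a_N)/a_N -> u.  Peeling off leading blocks then gives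
   |S(n) - n u| <= eps n + C(eps), i.e. S(n)/n -> u. *)

From Stdlib Require Import Reals ZArith Arith List Lra Lia.
From Coquelicot Require Import Coquelicot.

(** * Greedy representations *)

Section Greedy.
Local Open Scope nat_scope.
Variable a : nat -> nat.
Hypothesis a_incr : strictly_increasing a.

Lemma a_le_mono i j : i <= j -> a i <= a j.
Proof. induction 1 as [|j _ IH]; [lia|]. pose proof (a_incr j); lia. Qed.

Lemma a_lt_mono i j : i < j -> a i < a j.
Proof. intros Hij. pose proof (a_incr i). pose proof (a_le_mono (S i) j Hij). lia. Qed.

Lemma top_below_lt m k : 0 < k -> top_below a m k < k.
Proof.
  induction k as [|k IH]; simpl; intros Hk; [lia|].
  destruct (Nat.leb (a k) m); [lia|].
  destruct k; [simpl; lia|]. specialize (IH ltac:(lia)). lia.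
Qed.

Lemma top_below_max m k j : top_below a m k < j < k -> m < a j.
Proof.
  induction k as [|k IH]; simpl; intros Hj; [lia|].
  destruct (Nat.leb_spec (a k) m); [lia|].
  destruct (Nat.eq_dec j k); [subst; lia | apply IH; lia].
Qed.

Lemma top_below_extend m k k' : m < a k -> k <= k' -> top_below a m k' = top_below a m k.
Proof.
  intros Hm; induction 1 as [|k' Hk IH]; simpl; [reflexivity|].
  destruct (Nat.leb_spec (a k') m); [pose proof (a_le_mono k k' Hk); lia | exact IH].
Qed.

Lemma top_below_stable m k k' : m < a k -> m < a k' -> top_below a m k = top_below a m k'.
Proof.
  intros Hk Hk'. destruct (Nat.le_ge_cases k k').
  - symmetry; apply top_below_extend; assumption.
  - apply top_below_extend; assumption.
Qed.

Hypothesis a0 : a 0 = 1.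

Lemma index_lt_a i : i < a i.
Proof. induction i; [lia|]. pose proof (a_incr i); lia. Qed.

Lemma top_below_le m k : 1 <= m -> a (top_below a m k) <= m.
Proof.
  intros Hm; induction k as [|k IH]; simpl; [lia|].
  destruct (Nat.leb_spec (a k) m); [lia | exact IH].
Qed.

Lemma greedy_rep_stable f f' k k' m : m <= f -> m <= f' -> m < a k -> m < a k' ->
  greedy_rep a k f m = greedy_rep a k' f' m.
Proof.
  revert f' m; induction f as [|f IH]; intros f' m Hf Hf' Hk Hk'.
  - replace m with 0 by lia. destruct f'; reflexivity.
  - destruct m as [|m]; [destruct f'; reflexivity|].
    destruct f' as [|f']; [lia|]. cbn [greedy_rep Nat.eqb].
    rewrite (top_below_stable (S m) k k' Hk Hk').
    pose proof (a_le_mono 0 (top_below a (S m) k') ltac:(lia)).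
    f_equal. apply IH; lia.
Qed.

Definition greedy_top (m : nat) : nat := top_below a m (S m).
Definition greedy_digits (m : nat) : list nat := greedy_rep a (S m) m m.

Lemma greedy_top_spec m : 1 <= m -> a (greedy_top m) <= m < a (S (greedy_top m)).
Proof.
  intros Hm. unfold greedy_top. split; [apply top_below_le; exact Hm|].
  pose proof (top_below_lt m (S m) ltac:(lia)).
  destruct (Nat.eq_dec (top_below a m (S m)) m) as [E|E].
  - rewrite E. pose proof (index_lt_a (S m)). lia.
  - apply (top_below_max m (S m)). lia.
Qed.

Lemma greedy_top_unique m i : a i <= m < a (S i) -> greedy_top m = i.
Proof.
  intros Hi. pose proof (index_lt_a i).
  destruct (greedy_top_spec m ltac:(lia)).
  destruct (Nat.lt_trichotomy (greedy_top m) i) as [L|[L|L]]; [|exact L|].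
  - pose proof (a_le_mono (S (greedy_top m)) i L). lia.
  - pose proof (a_le_mono (S i) (greedy_top m) L). lia.
Qed.

Lemma greedy_digits_step m : 1 <= m ->
  greedy_digits m = greedy_top m :: greedy_digits (m - a (greedy_top m)).
Proof.
  intros Hm. unfold greedy_digits. destruct m as [|m]; [lia|].
  cbn [greedy_rep Nat.eqb]. fold (greedy_top (S m)). f_equal.
  pose proof (greedy_top_spec (S m) Hm).
  pose proof (a_le_mono 0 (greedy_top (S m)) ltac:(lia)).
  pose proof (index_lt_a (S (S m))). pose proof (index_lt_a (S (S m - a (greedy_top (S m))))).
  apply greedy_rep_stable; lia.
Qed.

Lemma greedy_digits_le m j : In j (greedy_digits m) -> a j <= m.
Proof.
  induction m as [m IH] using lt_wf_ind; intros Hj.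
  destruct m as [|m]; [destruct Hj|].
  rewrite greedy_digits_step in Hj by lia.
  pose proof (greedy_top_spec (S m) ltac:(lia)).
  pose proof (a_le_mono 0 (greedy_top (S m)) ltac:(lia)).
  destruct Hj as [<-|Hj]; [lia|].
  specialize (IH (S m - a (greedy_top (S m))) ltac:(lia) Hj). lia.
Qed.

Lemma greedy_rep_a i : 1 <= i ->
  greedy_rep a i (a i) (a i) = (i - 1) :: greedy_digits (a i - a (i - 1)).
Proof.
  intros Hi. destruct i as [|i]; [lia|]. replace (S i - 1) with i by lia.
  pose proof (index_lt_a (S i)). pose proof (a_incr i).
  destruct (a (S i)) as [|f] eqn:Ea; [lia|]. cbn [greedy_rep Nat.eqb top_below].
  destruct (Nat.leb_spec (a i) (S f)); [|lia]. f_equal.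
  pose proof (a_le_mono 0 i ltac:(lia)). pose proof (index_lt_a (S (S f - a i))).
  apply greedy_rep_stable; lia.
Qed.

End Greedy.

Lemma e_add x y : e (x + y) = (e x * e y)%C.
Proof.
  unfold e, Cmult; simpl. rewrite Rmult_plus_distr_l, cos_plus, sin_plus.
  f_equal; ring.
Qed.

Lemma Cmod_e x : Cmod (e x) = 1.
Proof.
  unfold e, Cmod; simpl. rewrite !Rmult_1_r, <- sqrt_1. f_equal.
  pose proof (sin2_cos2 (2 * PI * x)) as H. unfold Rsqr in H. lra.
Qed.

Lemma e_IZR_add z t : e (IZR z + t) = e t.
Proof.
  assert (Enat : forall k t, e (INR k + t) = e t).
  { intros k t'. unfold e.
    replace (2 * PI * (INR k + t')) with (2 * PI * t' + 2 * INR k * PI) by ring.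
    rewrite cos_period, sin_period. reflexivity. }
  destruct (Z_le_gt_dec 0 z) as [Hz|Hz].
  - rewrite <- (Z2Nat.id z Hz), <- INR_IZR_INZ. apply Enat.
  - rewrite <- (Enat (Z.to_nat (- z))), INR_IZR_INZ, Z2Nat.id, opp_IZR by lia.
    f_equal; ring.
Qed.

Lemma one_minus_cos_le u : 1 - cos u <= u * u / 2.
Proof.
  destruct (Rle_lt_dec (Rabs u) 2) as [H|H].
  - apply Rabs_le_between in H.
    pose proof (pre_cos_bound u 0 ltac:(lra) ltac:(lra)) as [Hc _].
    unfold cos_approx, cos_term in Hc. simpl in Hc. lra.
  - pose proof (COS_bound u). pose proof (Rsqr_abs u) as E. unfold Rsqr in E.
    nra.
Qed.

Lemma Cmod_le_pair x y c : 0 <= c -> x * x + y * y <= c * c -> Cmod (x, y) <= c.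
Proof.
  intros Hc H. unfold Cmod; simpl. rewrite <- (sqrt_square c Hc).
  apply sqrt_le_1_alt. lra.
Qed.

Lemma Cmod_e_sub1_le t : Cmod (e t - 1) <= 2 * PI * Rabs t.
Proof.
  pose proof PI_RGT_0. pose proof (Rabs_pos t).
  unfold e, Cminus, Cplus, Copp, RtoC; simpl. apply Cmod_le_pair; [nra|].
  pose proof (sin2_cos2 (2 * PI * t)) as Hsc. unfold Rsqr in Hsc.
  pose proof (one_minus_cos_le (2 * PI * t)).
  pose proof (Rsqr_abs t) as E. unfold Rsqr in E. nra.
Qed.

(* Shift [x] by an integer to [frac x] or [frac x - 1], whichever is closer to [0]. *)
Lemma Cmod_e_sub1_le_dist_int x : Cmod (e x - 1) <= 2 * PI * dist_int x.
Proof.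
  pose proof PI_RGT_0. pose proof (base_Int_part x).
  unfold dist_int, Rmin, frac_part in *. destruct (Rle_dec _ _).
  - replace x with (IZR (Int_part x) + (x - IZR (Int_part x))) at 1 by ring.
    rewrite e_IZR_add. eapply Rle_trans; [apply Cmod_e_sub1_le|].
    rewrite Rabs_right by lra. lra.
  - replace x with (IZR (Int_part x + 1) + (x - IZR (Int_part x) - 1))
      at 1 by (rewrite plus_IZR; ring).
    rewrite e_IZR_add. eapply Rle_trans; [apply Cmod_e_sub1_le|].
    rewrite Rabs_left1 by lra. lra.
Qed.

Lemma fold_right_Cplus_init (l : list C) x : fold_right Cplus x l = (fold_right Cplus 0 l + x)%C.
Proof. induction l as [|y l IH]; simpl; [|rewrite IH]; ring. Qed.

Lemma Re_mul_le c z w : Cmod c <= 1 -> Re (c * z) <= Re (c * w) + Cmod (z - w).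
Proof.
  intros Hc. replace (c * z)%C with (c * w + c * (z - w))%C by ring.
  rewrite re_plus. pose proof (re_le_Cmod (c * (z - w))) as H.
  rewrite Cmod_mult in H. apply Rabs_le_between in H.
  pose proof (Cmod_ge_0 (z - w)). nra.
Qed.

Lemma Cmod_le_Re_Im z : Cmod z <= Rabs (Re z) + Rabs (Im z).
Proof.
  destruct z as [x y]. unfold Re, Im; simpl.
  apply Cmod_le_pair; [pose proof (Rabs_pos x); pose proof (Rabs_pos y); lra|].
  pose proof (Rsqr_abs x) as Ex. pose proof (Rsqr_abs y) as Ey. unfold Rsqr in Ex, Ey.
  pose proof (Rabs_pos x). pose proof (Rabs_pos y). nra.
Qed.

(** * Exponential sums along the replacement sequence *)

Section ExpSums.
Variables (a : nat -> nat) (b : nat -> Z) (alpha : R).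
Hypothesis a_incr : strictly_increasing a.
Hypothesis a0 : a 0%nat = 1%nat.

Lemma replacement_step m : (1 <= m)%nat ->
  replacement a b m = (b (greedy_top a m) + replacement a b (m - a (greedy_top a m)))%Z.
Proof.
  intros Hm. unfold replacement. fold (greedy_digits a m).
  fold (greedy_digits a (m - a (greedy_top a m))).
  rewrite greedy_digits_step by assumption. reflexivity.
Qed.

Fixpoint esum (n : nat) : C :=
  match n with
  | O => 0
  | S n => (esum n + e (alpha * IZR (replacement a b n)))%C
  end.

Lemma weyl_sum_esum n : weyl_sum (replacement a b) alpha n = (RtoC (/ INR n) * esum n)%C.
Proof.
  unfold weyl_sum. f_equal. induction n as [|n IH]; [reflexivity|].
  rewrite seq_S, map_app, fold_right_app. simpl.
  rewrite fold_right_Cplus_init, IH. ring.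
Qed.

Lemma Cmod_esum_le n : Cmod (esum n) <= INR n.
Proof.
  induction n as [|n IH]; simpl esum.
  - rewrite Cmod_0. simpl; lra.
  - eapply Rle_trans; [apply Cmod_triangle|]. rewrite Cmod_e, S_INR. lra.
Qed.

(* For [a i <= m < a (S i)] the greedy representation of [m] starts with [a i],
   so [A m = b i + A (m - a i)]. *)
Lemma esum_block i n : (a i <= n <= a (S i))%nat ->
  esum n = (esum (a i) + e (alpha * IZR (b i)) * esum (n - a i))%C.
Proof.
  intros [Hlo Hhi]. destruct (Nat.le_exists_sub (a i) n Hlo) as [d [-> _]].
  rewrite Nat.add_sub. induction d as [|d IH]; simpl esum; [ring|].
  rewrite IH by lia. pose proof (index_lt_a a a_incr a0 i).
  rewrite replacement_step, (greedy_top_unique a a_incr a0 (d + a i) i), Nat.add_sub by lia.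
  rewrite plus_IZR, Rmult_plus_distr_l, e_add. ring.
Qed.

Definition defect (k : nat) : R := Cmod (e (alpha * IZR (b k)) - 1).

Lemma defect_nonneg k : 0 <= defect k.
Proof. apply Cmod_ge_0. Qed.

Lemma Cmod_esum_block_sub i n : (a i <= n <= a (S i))%nat ->
  Cmod (esum n - (esum (a i) + esum (n - a i))) <= defect i * INR (n - a i).
Proof.
  intros Hn. rewrite (esum_block i n Hn).
  replace (_ - _)%C with ((e (alpha * IZR (b i)) - 1) * esum (n - a i))%C by ring.
  rewrite Cmod_mult. apply Rmult_le_compat_l; [apply Cmod_ge_0 | apply Cmod_esum_le].
Qed.

Lemma Re_esum_le_digits c m lo M D : Cmod c <= 1 -> 0 <= D ->
  (forall j, In j (greedy_digits a m) ->
     (lo <= j)%nat /\ defect j <= D /\ Re (c * esum (a j)) <= INR (a j) * M) ->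
  Re (c * esum m) <= INR m * M + INR m * INR m * (D / INR (a lo)).
Proof.
  intros Hc HD. induction m as [m IH] using lt_wf_ind; intros Hdig.
  destruct (Nat.eq_dec m 0) as [->|Hm]; [simpl; lra|].
  set (N := greedy_top a m). set (m' := (m - a N)%nat).
  pose proof (greedy_top_spec a a_incr a0 m ltac:(lia)) as HN. fold N in HN.
  pose proof (a_le_mono a a_incr 0%nat N ltac:(lia)) as HaN. rewrite a0 in HaN.
  assert (Hdigits : greedy_digits a m = N :: greedy_digits a m')
    by (apply greedy_digits_step; auto; lia).
  rewrite Hdigits in Hdig.
  destruct (Hdig N (or_introl eq_refl)) as [HlN [HdN HreN]].
  specialize (IH m' ltac:(unfold m'; lia) (fun j Hj => Hdig j (or_intror Hj))).
  assert (Hre : Re (c * esum m) <= Re (c * esum (a N)) + Re (c * esum m') + defect N * INR m').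
  { eapply Rle_trans; [apply (Re_mul_le c _ (esum (a N) + esum m')%C Hc)|].
    rewrite Cmult_plus_distr_l, re_plus. apply Rplus_le_compat_l.
    apply Cmod_esum_block_sub. lia. }
  assert (Em : INR m = INR (a N) + INR m') by (rewrite <- plus_INR; f_equal; unfold m'; lia).
  assert (Hlo : 0 < INR (a lo) <= INR (a N)).
  { pose proof (index_lt_a a a_incr a0 lo).
    split; [apply lt_0_INR; lia | apply le_INR, a_le_mono; assumption]. }
  assert (Ht : D = INR (a lo) * (D / INR (a lo))) by (field; lra).
  pose proof (pos_INR m'). assert (0 <= D / INR (a lo)) by (apply Rdiv_le_0_compat; lra).
  set (t := D / INR (a lo)) in *.
  assert (defect N * INR m' <= INR (a N) * t * INR m').
  { rewrite Ht in HdN. apply Rmult_le_compat_r; [lra|].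
    eapply Rle_trans; [exact HdN|]. apply Rmult_le_compat_r; lra. }
  assert (0 <= INR (a N) * t * (INR (a N) + INR m')) by (apply Rmult_le_pos; nra).
  rewrite Em. nra.
Qed.

Lemma ex_series_defect : ex_series (fun k => dist_int (alpha * IZR (b k))) -> ex_series defect.
Proof.
  intros Hdist. apply (ex_series_le defect (fun k => 2 * PI * dist_int (alpha * IZR (b k)))).
  - intros k. change (Rabs (defect k) <= 2 * PI * dist_int (alpha * IZR (b k))).
    rewrite Rabs_pos_eq by apply defect_nonneg. apply Cmod_e_sub1_le_dist_int.
  - apply (ex_series_scal_l (2 * PI) _ Hdist).
Qed.

End ExpSums.

Fixpoint sum_from (f : nat -> R) (i n : nat) : R :=
  match n with
  | O => 0
  | S n => sum_from f i n + f (i + n)%nat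
  end.

Lemma sum_from_nonneg f i n : (forall j, 0 <= f j) -> 0 <= sum_from f i n.
Proof. intros Hf; induction n as [|n IH]; simpl; [lra|]. pose proof (Hf (i + n)%nat); lra. Qed.

Lemma sum_from_term f i n q : (forall j, 0 <= f j) -> (q < n)%nat -> f (i + q)%nat <= sum_from f i n.
Proof.
  intros Hf Hq. induction n as [|n IH]; simpl; [lia|].
  pose proof (sum_from_nonneg f i n Hf). pose proof (Hf (i + n)%nat).
  destruct (Nat.eq_dec q n) as [->|]; [lra|]. specialize (IH ltac:(lia)). lra.
Qed.

Lemma sum_from_sum_n_m f i n : sum_from f i (S n) = sum_n_m f i (i + n).
Proof.
  induction n as [|n IH].
  - simpl. rewrite Nat.add_0_r, sum_n_n. ring.
  - change (sum_from f i (S (S n))) with (sum_from f i (S n) + f (i + S n)%nat).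
    rewrite IH, Nat.add_succ_r, sum_n_Sm by lia. reflexivity.
Qed.

Lemma ex_series_sum_from_small (f : nat -> R) : (forall j, 0 <= f j) -> ex_series f ->
  forall eps, 0 < eps -> exists N, forall i n, (N <= i)%nat -> sum_from f i n <= eps.
Proof.
  intros Hf Hser eps Heps.
  destruct (Cauchy_ex_series f Hser (mkposreal eps Heps)) as [N HN].
  exists N. intros i [|n] Hi; [simpl; lra|].
  rewrite sum_from_sum_n_m. specialize (HN i (i + n)%nat Hi ltac:(lia)).
  apply Rlt_le, (Rle_lt_trans _ _ _ (Rle_abs _)), HN.
Qed.

Lemma ex_series_shift (f : nat -> R) p q : ex_series f -> ex_series (fun j => f (j - p + q)%nat).
Proof.
  intros Hf. apply (ex_series_incr_n (fun j => f (j - p + q)%nat) p).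
  apply (ex_series_ext (fun j => f (q + j)%nat)); [intros j; f_equal; lia|].
  apply ex_series_incr_n, Hf.
Qed.

Lemma ex_series_sum_from_shift (f : nat -> R) p n :
  ex_series f -> ex_series (fun j => sum_from f (j - p) n).
Proof.
  intros Hf. induction n as [|n IH]; simpl.
  - apply (ex_series_ext (fun j => f j * 0)); [intros; apply Rmult_0_r | apply ex_series_scal_r, Hf].
  - apply (ex_series_plus _ _ IH (ex_series_shift f p n Hf)).
Qed.

Lemma pow_le_of_le1 x m n : 0 <= x <= 1 -> (m <= n)%nat -> x ^ n <= x ^ m.
Proof.
  intros Hx. induction 1 as [|n _ IH]; simpl; [lra|].
  pose proof (pow_le x n (proj1 Hx)). nra.
Qed.

(** * Sequences contracting over windows *)

Section WindowContraction.
Variables (L : nat) (e0 : R) (eta : nat -> R).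
Hypothesis L_pos : (1 <= L)%nat.
Hypothesis e0_range : 0 < e0 <= 1.
Hypothesis eta_nonneg : forall j, 0 <= eta j.

Lemma contraction_factor_bounds : 0 < e0 ^ L / 2 <= 1 / 2.
Proof.
  pose proof (pow_le_of_le1 e0 0 L ltac:(lra) ltac:(lia)). pose proof (pow_lt e0 L ltac:(lra)).
  simpl in *. lra.
Qed.

Definition upper_contractive (x : nat -> R) (j0 : nat) : Prop :=
  forall j M, (j0 <= j)%nat -> (forall k, (j - L <= k < j)%nat -> x k <= M) ->
    x j <= (1 - e0) * M + e0 * x (j - 1)%nat + eta j.

Lemma upper_drift x j0 i hi : upper_contractive x j0 -> (j0 <= i)%nat ->
  (forall k, (i <= k < i + L)%nat -> x k <= hi) ->
  forall n k, (i <= k < i + L + n)%nat -> x k <= hi + sum_from eta (i + L) n.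
Proof.
  intros Hx Hi Hwin n. induction n as [|n IH]; intros k Hk; simpl sum_from.
  - rewrite Rplus_0_r. apply Hwin. lia.
  - pose proof (eta_nonneg (i + L + n)).
    destruct (Nat.eq_dec k (i + L + n)) as [->|Hkn]; [|specialize (IH k ltac:(lia)); lra].
    pose proof (IH (i + L + n - 1)%nat ltac:(lia)).
    pose proof (Hx (i + L + n)%nat _ ltac:(lia) (fun k' Hk' => IH k' ltac:(lia))). nra.
Qed.

(* From [x (i + L) <= hi - d] the gap below [hi] decays by at most a factor [e0] per step. *)
Lemma upper_pull_down x j0 i hi d : upper_contractive x j0 -> (j0 <= i)%nat -> 0 <= d ->
  (forall k, (i <= k < i + L)%nat -> x k <= hi) -> x (i + L)%nat <= hi - d ->
  forall k, (i + L <= k < i + L + L)%nat ->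
    x k <= hi - e0 ^ L * d + INR L * sum_from eta (i + L) L.
Proof.
  intros Hx Hi Hd Hwin Hfirst.
  set (tau := sum_from eta (i + L) L).
  assert (Htau : 0 <= tau) by (apply sum_from_nonneg; exact eta_nonneg).
  pose proof (upper_drift x j0 i hi Hx Hi Hwin L) as Hdrift. fold tau in Hdrift.
  assert (Hgap : forall p, (p < L)%nat -> x (i + L + p)%nat <= hi + tau - e0 ^ p * d + INR p * tau).
  { induction p as [|p IH]; intros Hp.
    - rewrite Nat.add_0_r. simpl. lra.
    - pose proof (Hx (i + L + S p)%nat (hi + tau) ltac:(lia) (fun k Hk => Hdrift k ltac:(lia)))
        as Hstep.
      replace (i + L + S p - 1)%nat with (i + L + p)%nat in Hstep by lia.
      pose proof (sum_from_term eta (i + L) L (S p) eta_nonneg Hp) as Heta. fold tau in Heta.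
      specialize (IH ltac:(lia)). pose proof (pos_INR p) as Hp0. pose proof (pow_le e0 p ltac:(lra)).
      rewrite S_INR; simpl pow.
      assert (e0 * (INR p * tau) <= INR p * tau) by (pose proof (Rmult_le_pos _ _ Hp0 Htau); nra).
      nra. }
  intros k Hk. replace k with (i + L + (k - (i + L)))%nat by lia.
  pose proof (Hgap (k - (i + L))%nat ltac:(lia)).
  pose proof (pow_le_of_le1 e0 (k - (i + L)) L ltac:(lra) ltac:(lia)).
  assert (INR (k - (i + L)) + 1 <= INR L) by (rewrite <- S_INR; apply le_INR; lia).
  nra.
Qed.

Lemma window_drift x y j0 i lo hi :
  upper_contractive x j0 -> upper_contractive y j0 -> (forall k, y k = - x k) -> (j0 <= i)%nat ->
  (forall k, (i <= k < i + L)%nat -> lo <= x k <= hi) ->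
  forall n k, (i <= k < i + L + n)%nat ->
    lo - sum_from eta (i + L) n <= x k <= hi + sum_from eta (i + L) n.
Proof.
  intros Hx Hy Hyx Hi Hwin n k Hk. split.
  - assert (Hywin : forall k, (i <= k < i + L)%nat -> y k <= - lo)
      by (intros k' Hk'; rewrite Hyx; specialize (Hwin k' Hk'); lra).
    pose proof (upper_drift y j0 i (- lo) Hy Hi Hywin n k Hk) as Hdrift.
    rewrite Hyx in Hdrift. lra.
  - apply (upper_drift x j0 i hi Hx Hi); [intros k' Hk'; apply Hwin, Hk' | exact Hk].
Qed.

Lemma window_step_case x y j0 i lo hi :
  upper_contractive x j0 -> upper_contractive y j0 -> (forall k, y k = - x k) -> (j0 <= i)%nat ->
  (forall k, (i <= k < i + L)%nat -> lo <= x k <= hi) -> x (i + L)%nat <= (lo + hi) / 2 ->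
  forall k, (i + L <= k < i + L + L)%nat ->
    lo - sum_from eta (i + L) L <= x k
    <= hi - e0 ^ L * ((hi - lo) / 2) + INR L * sum_from eta (i + L) L.
Proof.
  intros Hx Hy Hyx Hi Hwin Hmid k Hk. split.
  - apply (window_drift x y j0 i lo hi Hx Hy Hyx Hi Hwin L k). lia.
  - assert (lo <= hi) by (specialize (Hwin i ltac:(lia)); lra).
    apply (upper_pull_down x j0 i); [assumption.. | lra | | lra | assumption].
    intros k' Hk'. apply Hwin, Hk'.
Qed.

Section Pair.
Variables (x y : nat -> R) (j0 : nat).
Hypothesis x_upper : upper_contractive x j0.
Hypothesis y_upper : upper_contractive y j0.
Hypothesis y_opp : forall k, y k = - x k.

(* Whichever half of [lo, hi] contains [x (i + L)], the next window loses a fixed fraction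
   of the other half. *)
Lemma window_step i lo hi : (j0 <= i)%nat ->
  (forall k, (i <= k < i + L)%nat -> lo <= x k <= hi) ->
  exists lo' hi', (forall k, (i + L <= k < i + L + L)%nat -> lo' <= x k <= hi') /\
    hi' - lo' <= (1 - e0 ^ L / 2) * (hi - lo) + (INR L + 1) * sum_from eta (i + L) L.
Proof.
  intros Hi Hwin. destruct (Rle_lt_dec (x (i + L)%nat) ((lo + hi) / 2)) as [Hmid|Hmid].
  - eexists _, _.
    split; [exact (window_step_case x y j0 i lo hi x_upper y_upper y_opp Hi Hwin Hmid) | lra].
  - assert (Hxy : forall k, x k = - y k) by (intros k; rewrite y_opp; ring).
    assert (Hywin : forall k, (i <= k < i + L)%nat -> - hi <= y k <= - lo)
      by (intros k Hk; rewrite y_opp; specialize (Hwin k Hk); lra).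
    assert (Hymid : y (i + L)%nat <= (- hi + - lo) / 2) by (rewrite y_opp; lra).
    pose proof (window_step_case y x j0 i (- hi) (- lo) y_upper x_upper Hxy Hi Hywin Hymid) as Hcase.
    exists (lo + e0 ^ L * ((hi - lo) / 2) - INR L * sum_from eta (i + L) L),
      (hi + sum_from eta (i + L) L).
    split; [intros k Hk; specialize (Hcase k Hk); rewrite y_opp in Hcase; lra | lra].
Qed.

Lemma window_iterate I0 B rho : (j0 <= I0)%nat -> (forall k, Rabs (x k) <= B) ->
  (forall i, (I0 <= i)%nat -> sum_from eta i L <= rho) ->
  forall n, exists lo hi, (forall k, (I0 + n * L <= k < I0 + n * L + L)%nat -> lo <= x k <= hi) /\
    hi - lo <= (1 - e0 ^ L / 2) ^ n * (2 * B) + (INR L + 1) * rho / (e0 ^ L / 2).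
Proof.
  intros HI0 HB Hrho. set (c := e0 ^ L / 2). set (K := INR L + 1).
  destruct contraction_factor_bounds as [Hc Hc1]. fold c in Hc, Hc1.
  assert (Hrho0 : 0 <= rho)
    by (eapply Rle_trans; [apply sum_from_nonneg, eta_nonneg | apply (Hrho I0), le_n]).
  assert (HK : 0 <= K * rho / c)
    by (pose proof (pos_INR L); apply Rdiv_le_0_compat; [unfold K; nra | lra]).
  induction n as [|n IH].
  - exists (- B), B. split; [intros k _; apply Rabs_le_between, HB | simpl; lra].
  - destruct IH as [lo [hi [Hwin Hw]]].
    destruct (window_step (I0 + n * L) lo hi ltac:(lia) Hwin) as [lo' [hi' [Hwin' Hw']]].
    exists lo', hi'. replace (I0 + S n * L)%nat with (I0 + n * L + L)%nat by (simpl; lia).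
    split; [exact Hwin'|]. fold c K in Hw'.
    pose proof (Hrho (I0 + n * L + L)%nat ltac:(lia)).
    assert (E : K * rho = c * (K * rho / c)) by (field; lra).
    assert (K * sum_from eta (I0 + n * L + L) L <= K * rho)
      by (apply Rmult_le_compat_l; [pose proof (pos_INR L); unfold K|]; lra).
    assert ((1 - c) * (hi - lo) <= (1 - c) * ((1 - c) ^ n * (2 * B) + K * rho / c))
      by (apply Rmult_le_compat_l; lra).
    simpl pow. lra.
Qed.

Lemma contractive_cauchy B : ex_series eta -> (forall k, Rabs (x k) <= B) -> Cauchy_crit x.
Proof.
  intros Heta HB eps Heps. set (c := e0 ^ L / 2). set (K := INR L + 1).
  destruct contraction_factor_bounds as [Hc Hc1]. fold c in Hc, Hc1.
  assert (HK : 1 <= K) by (pose proof (pos_INR L); unfold K; lra).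
  assert (HB0 : 0 <= B) by (specialize (HB 0%nat); pose proof (Rabs_pos (x 0%nat)); lra).
  set (rho := eps * c / (8 * K)).
  assert (Hrho : 0 < rho) by (apply Rdiv_lt_0_compat; nra).
  destruct (ex_series_sum_from_small eta eta_nonneg Heta rho Hrho) as [N0 HN0].
  destruct (pow_lt_1_zero (1 - c) ltac:(rewrite Rabs_right; lra) (eps / (4 * (B + 1))))
    as [n0 Hn0]; [apply Rdiv_lt_0_compat; lra|].
  specialize (Hn0 n0 (le_n n0)). rewrite Rabs_right in Hn0 by (apply Rle_ge, pow_le; lra).
  destruct (window_iterate (N0 + j0) B rho ltac:(lia) HB (fun i Hi => HN0 i L ltac:(lia)) n0)
    as [lo [hi [Hwin Hw]]]. fold c K in Hw.
  set (i := (N0 + j0 + n0 * L)%nat) in Hwin.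
  assert (Hconf : forall k, (i <= k)%nat -> lo - rho <= x k <= hi + rho).
  { intros k Hk. pose proof (HN0 (i + L)%nat k ltac:(lia)).
    pose proof (window_drift x y j0 i lo hi x_upper y_upper y_opp ltac:(lia) Hwin k k ltac:(lia)).
    lra. }
  assert (Hsmall : (1 - c) ^ n0 * (2 * B) <= eps / 2).
  { apply Rlt_le in Hn0. apply (Rmult_le_compat_r (2 * B)) in Hn0; [|lra].
    eapply Rle_trans; [exact Hn0|]. apply (Rmult_le_reg_r (4 * (B + 1))); [lra|].
    field_simplify; [nra | lra]. }
  assert (Hrho_eq : K * rho = c * (eps / 8)) by (unfold rho; field; lra).
  assert (K * rho / c = eps / 8) by (rewrite Hrho_eq; field; lra).
  assert (rho <= eps / 16) by nra.
  exists i. intros n m Hn Hm. pose proof (Hconf n Hn). pose proof (Hconf m Hm).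
  unfold R_dist. apply Rabs_def1; lra.
Qed.

End Pair.
End WindowContraction.

(** * Averages over the blocks [a_i] *)

Section BlockAverages.
Variables (a : nat -> nat) (b : nat -> Z) (alpha : R).
Hypothesis a_incr : strictly_increasing a.
Hypothesis a0 : a 0%nat = 1%nat.
Variable s : R.
Hypothesis s_gt1 : 1 < s.
Hypothesis a_growth : forall n, INR (a (S n)) < s * INR (a n).
Variable L : nat.
Hypothesis L_pos : (1 <= L)%nat.
Hypothesis greedy_window : forall n, (1 <= n)%nat ->
  forall j, In j (greedy_rep a n (a n) (a n)) -> (n - L <= j)%nat.

Local Notation ES := (esum a b alpha).
Local Notation dlt := (defect b alpha).

Lemma INR_a_pos i : 0 < INR (a i).
Proof. apply lt_0_INR. pose proof (index_lt_a a a_incr a0 i). lia. Qed.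

Lemma INR_a_growth p i : INR (a (i + p)%nat) <= s ^ p * INR (a i).
Proof.
  induction p as [|p IH]; [rewrite Nat.add_0_r; simpl; lra|].
  rewrite Nat.add_succ_r. simpl pow. pose proof (a_growth (i + p)). nra.
Qed.

Definition block_avg (c : C) (i : nat) : R := Re (c * ES (a i)) / INR (a i).

Lemma Re_block_avg c i : Re (c * ES (a i)) = block_avg c i * INR (a i).
Proof. unfold block_avg. field. apply Rgt_not_eq, INR_a_pos. Qed.

Lemma block_avg_opp c i : block_avg (- c) i = - block_avg c i.
Proof.
  unfold block_avg. replace (- c * ES (a i))%C with (- (c * ES (a i)))%C by ring.
  rewrite re_opp. field. apply Rgt_not_eq, INR_a_pos.
Qed.

Lemma Rabs_block_avg_le c i : Cmod c <= 1 -> Rabs (block_avg c i) <= 1.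
Proof.
  intros Hc. pose proof (INR_a_pos i). unfold block_avg, Rdiv.
  rewrite Rabs_mult, Rabs_inv, (Rabs_right (INR (a i))) by lra.
  apply (Rmult_le_reg_r (INR (a i))); [lra|]. rewrite Rmult_assoc, Rinv_l, Rmult_1_r, Rmult_1_l by lra.
  eapply Rle_trans; [apply re_le_Cmod|]. rewrite Cmod_mult.
  pose proof (Cmod_esum_le a b alpha (a i)). pose proof (Cmod_ge_0 (ES (a i))). nra.
Qed.

Definition window_defect (j : nat) : R := sum_from dlt (j - L) L.

(* The digits of [a j - a (j - 1)] lie in the window [j - L, j), by the mild signature. *)
Lemma Re_esum_a_le c j M : Cmod c <= 1 -> (L <= j)%nat ->
  (forall k, (j - L <= k < j)%nat -> block_avg c k <= M) ->
  let q := INR (a j - a (j - 1)) in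
  Re (c * ES (a j)) <= Re (c * ES (a (j - 1))) + q * M + q * q * (window_defect j / INR (a (j - L)))
    + dlt (j - 1)%nat * q.
Proof.
  intros Hc Hj HM q.
  assert (Hjj : S (j - 1) = j) by lia.
  pose proof (a_lt_mono a a_incr (j - 1) j ltac:(lia)).
  assert (Hblock : Re (c * ES (a j)) <= Re (c * (ES (a (j - 1)) + ES (a j - a (j - 1))))
      + dlt (j - 1)%nat * q).
  { eapply Rle_trans; [apply Re_mul_le, Hc|]. apply Rplus_le_compat_l.
    apply Cmod_esum_block_sub; [exact a_incr | exact a0 | rewrite Hjj; lia]. }
  rewrite Cmult_plus_distr_l, re_plus in Hblock.
  enough (Re (c * ES (a j - a (j - 1))) <= q * M + q * q * (window_defect j / INR (a (j - L)))) by lra.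
  apply Re_esum_le_digits; auto.
  - apply sum_from_nonneg, defect_nonneg.
  - intros j' Hj'.
    pose proof (greedy_window j ltac:(lia) j'
      ltac:(rewrite greedy_rep_a by (auto; lia); right; exact Hj')).
    pose proof (greedy_digits_le a a_incr a0 _ _ Hj').
    pose proof (a_le_mono a a_incr 0 (j - 1) ltac:(lia)).
    assert (j' < j)%nat
      by (destruct (Nat.lt_ge_cases j' j); [|pose proof (a_le_mono a a_incr j j')]; lia).
    split; [lia|]. split.
    + replace j' with (j - L + (j' - (j - L)))%nat by lia.
      apply sum_from_term; [apply defect_nonneg | lia].
    + rewrite Re_block_avg. pose proof (INR_a_pos j'). pose proof (HM j' ltac:(lia)). nra.
Qed.

Lemma INR_a_pred_ge j : (1 <= j)%nat -> INR (a j) / s <= INR (a (j - 1)).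
Proof.
  intros Hj. pose proof (a_growth (j - 1)) as G. replace (S (j - 1)) with j in G by lia.
  apply (Rmult_le_reg_r s); [lra|]. unfold Rdiv. rewrite Rmult_assoc, Rinv_l; lra.
Qed.

Lemma a_gap_sq_le j W : (L <= j)%nat -> 0 <= W ->
  let q := INR (a j) - INR (a (j - 1)) in
  q * q * (W / INR (a (j - L))) <= INR (a j) * (s ^ L * W).
Proof.
  intros Hj HW q. pose proof (INR_a_pos (j - L)). pose proof (INR_a_pos (j - 1)).
  assert (Hq : 0 <= q <= INR (a j))
    by (assert (INR (a (j - 1)) <= INR (a j)) by (apply le_INR, a_le_mono; auto; lia); unfold q; lra).
  assert (Hg : q / INR (a (j - L)) <= s ^ L).
  { pose proof (INR_a_growth L (j - L)) as G. replace (j - L + L)%nat with j in G by lia.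
    apply (Rmult_le_reg_r (INR (a (j - L)))); [lra|]. unfold Rdiv. rewrite Rmult_assoc, Rinv_l; lra. }
  replace (q * q * (W / INR (a (j - L)))) with (q * (q / INR (a (j - L))) * W) by (field; lra).
  rewrite <- Rmult_assoc. apply Rmult_le_compat_r; [exact HW|].
  apply Rmult_le_compat; [lra | apply Rdiv_le_0_compat; lra | lra | lra].
Qed.

Definition eta (j : nat) : R := s ^ L * window_defect j + dlt (j - 1)%nat.

Lemma eta_nonneg j : 0 <= eta j.
Proof.
  unfold eta. pose proof (pow_le s L ltac:(lra)). pose proof (defect_nonneg b alpha (j - 1)).
  assert (0 <= window_defect j) by apply sum_from_nonneg, defect_nonneg. nra.
Qed.

Lemma block_avg_upper_contractive c : Cmod c <= 1 ->
  upper_contractive L (1 / s) eta (block_avg c) L.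
Proof.
  intros Hc j M Hj HM.
  pose proof (Re_esum_a_le c j M Hc Hj HM) as Hre. cbv zeta in Hre.
  pose proof (a_gap_sq_le j (window_defect j) Hj ltac:(apply sum_from_nonneg, defect_nonneg)) as Hgap.
  pose proof (INR_a_pred_ge j ltac:(lia)) as Hpred. pose proof (INR_a_pos j) as Hpos.
  assert (HxM : block_avg c (j - 1) <= M) by (apply HM; lia).
  rewrite !Re_block_avg, minus_INR in Hre by (apply a_le_mono; auto; lia). cbv zeta in Hgap.
  set (rj := INR (a j)) in *. set (rp := INR (a (j - 1))) in *. set (x := block_avg c (j - 1)) in *.
  assert (Hdl : dlt (j - 1)%nat * (rj - rp) <= dlt (j - 1)%nat * rj).
  { apply Rmult_le_compat_l; [apply defect_nonneg|].
    pose proof (INR_a_pos (j - 1)) as P. fold rp in P. lra. }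
  assert (Hpull : x * rp + (rj - rp) * M <= rj * M - rj / s * (M - x))
    by (apply Rmult_le_compat_r with (r := M - x) in Hpred; lra).
  apply (Rmult_le_reg_r rj); [exact Hpos|]. unfold eta.
  replace (((1 - 1 / s) * M + 1 / s * x + (s ^ L * window_defect j + dlt (j - 1)%nat)) * rj)
    with (rj * M - rj / s * (M - x) + rj * (s ^ L * window_defect j) + dlt (j - 1)%nat * rj)
    by (field; lra).
  lra.
Qed.

Lemma ex_series_eta : ex_series dlt -> ex_series eta.
Proof.
  intros Hdlt.
  apply (ex_series_ext (fun j => plus (scal (s ^ L) (window_defect j)) (dlt (j - 1 + 0)%nat)));
    [intros j; unfold eta; rewrite Nat.add_0_r; reflexivity|].
  apply (ex_series_plus (fun j => scal (s ^ L) (window_defect j)) (fun j => dlt (j - 1 + 0)%nat)).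
  - apply (ex_series_scal_l (s ^ L) window_defect), ex_series_sum_from_shift, Hdlt.
  - apply ex_series_shift, Hdlt.
Qed.

Lemma block_avg_cauchy c : Cmod c <= 1 -> ex_series dlt -> Cauchy_crit (block_avg c).
Proof.
  intros Hc Hdlt.
  assert (Hc' : Cmod (- c) <= 1) by (rewrite Cmod_opp; exact Hc).
  assert (He0 : 0 < 1 / s <= 1).
  { split; [apply Rdiv_lt_0_compat; lra|]. apply (Rmult_le_reg_r s); [lra|].
    unfold Rdiv. rewrite Rmult_assoc, Rinv_l; lra. }
  apply (contractive_cauchy L (1 / s) eta L_pos He0 eta_nonneg _ (block_avg (- c)) L
           (block_avg_upper_contractive c Hc) (block_avg_upper_contractive (- c) Hc')
           (block_avg_opp c) 1 (ex_series_eta Hdlt) (fun k => Rabs_block_avg_le c k Hc)).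
Qed.

(* The real and imaginary parts of [esum (a N) / a N] are [block_avg 1 N] and [block_avg (- Ci) N]. *)
Lemma block_avgs_converge : ex_series dlt -> exists u : C, forall eps, 0 < eps ->
  exists K, forall N, (K <= N)%nat -> Cmod (ES (a N) - INR (a N) * u) <= eps * INR (a N).
Proof.
  intros Hdlt.
  assert (H1 : Cmod 1 <= 1) by (rewrite Cmod_1; lra).
  assert (Hi : Cmod (- Ci) <= 1) by (rewrite Cmod_opp, Cmod_Ci; lra).
  destruct (Rcomplete.R_complete _ (block_avg_cauchy 1 H1 Hdlt)) as [l1 Hl1].
  destruct (Rcomplete.R_complete _ (block_avg_cauchy (- Ci) Hi Hdlt)) as [l2 Hl2].
  exists (l1, l2). intros eps Heps.
  destruct (Hl1 (eps / 2) ltac:(lra)) as [K1 HK1]. destruct (Hl2 (eps / 2) ltac:(lra)) as [K2 HK2].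
  exists (K1 + K2)%nat. intros N HN.
  specialize (HK1 N ltac:(lia)). specialize (HK2 N ltac:(lia)). unfold R_dist, block_avg in HK1, HK2.
  pose proof (INR_a_pos N) as P. eapply Rle_trans; [apply Cmod_le_Re_Im|].
  destruct (ES (a N)) as [p1 p2]. unfold Re, Im, Ci, Cmult, Cminus, Cplus, Copp, RtoC in *; simpl in *.
  replace (p1 + - (INR (a N) * l1 - 0 * l2)) with (INR (a N) * ((1 * p1 - 0 * p2) / INR (a N) - l1))
    by (field; lra).
  replace (p2 + - (INR (a N) * l2 + 0 * l1))
    with (INR (a N) * ((- 0 * p1 - - (1) * p2) / INR (a N) - l2))
    by (field; lra).
  rewrite !Rabs_mult, Rabs_right by lra. nra.
Qed.

End BlockAverages.

Lemma lim_of_linear_approx (f : nat -> C) (u : C) :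
  (forall eps, 0 < eps -> exists H, forall n, Cmod (f n - INR n * u) <= eps * INR n + H) ->
  filterlim (fun n => RtoC (/ INR n) * f n)%C eventually (locally u).
Proof.
  intros Happrox. apply filterlim_locally. intros eps. pose proof (cond_pos eps) as Heps.
  destruct (Happrox (eps / 2) ltac:(lra)) as [H HH].
  assert (H0 : 0 <= H)
    by (specialize (HH 0%nat); pose proof (Cmod_ge_0 (f 0%nat - INR 0 * u)); simpl in *; lra).
  destruct (nfloor_ex (2 * H / eps)) as [N [_ HN]]; [apply Rdiv_le_0_compat; lra|].
  exists (S N). intros n Hn.
  assert (Hn0 : 0 < INR n) by (apply lt_0_INR; lia).
  assert (Hbig : 2 * H < eps * INR n).
  { rewrite (Rmult_comm eps). apply Rlt_div_l; [lra|].
    rewrite <- S_INR in HN. apply le_INR in Hn. lra. }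
  apply (@norm_compat1 C_AbsRing C_NormedModule). change (Cmod (RtoC (/ INR n) * f n - u) < eps).
  replace (RtoC (/ INR n) * f n - u)%C with (RtoC (/ INR n) * (f n - INR n * u))%C
    by (apply injective_projections; simpl; field; lra).
  rewrite Cmod_mult, Cmod_R, Rabs_right by (apply Rle_ge, Rlt_le, Rinv_0_lt_compat; lra).
  apply (Rmult_lt_reg_l (INR n)); [lra|]. rewrite <- Rmult_assoc, Rinv_r, Rmult_1_l by lra.
  specialize (HH n). lra.
Qed.

Section LinearApprox.
Variables (a : nat -> nat) (b : nat -> Z) (alpha : R).
Hypothesis a_incr : strictly_increasing a.
Hypothesis a0 : a 0%nat = 1%nat.
Variable s : R.
Hypothesis s_gt1 : 1 < s.
Hypothesis a_growth : forall n, INR (a (S n)) < s * INR (a n).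

Local Notation ES := (esum a b alpha).

(* Peel off the leading block [a N] of [n]: both the block and the defect it introduces are small. *)
Lemma esum_linear_approx (u : C) K eps : 0 <= eps ->
  (forall N, (K <= N)%nat ->
     Cmod (ES (a N) - INR (a N) * u) <= eps / 2 * INR (a N) /\ defect b alpha N <= eps / (2 * s)) ->
  forall n, Cmod (ES n - INR n * u) <= eps * INR n + (1 + Cmod u) * INR (a K).
Proof.
  intros Heps HK n. induction n as [n IH] using lt_wf_ind.
  pose proof (Cmod_ge_0 u). pose proof (pos_INR n).
  destruct (Nat.lt_ge_cases n (a K)) as [Hn|Hn].
  - assert (INR n <= INR (a K)) by (apply le_INR; lia).
    eapply Rle_trans; [apply Cmod_triangle|]. rewrite Cmod_opp, Cmod_mult, Cmod_R, Rabs_right by lra.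
    pose proof (Cmod_esum_le a b alpha n). nra.
  - assert (Hn1 : (1 <= n)%nat) by (pose proof (index_lt_a a a_incr a0 K); lia).
    destruct (greedy_top_spec a a_incr a0 n Hn1) as [T1 T2]. set (N := greedy_top a n) in *.
    assert (HKN : (K <= N)%nat)
      by (destruct (Nat.le_gt_cases K N);
          [assumption | pose proof (a_le_mono a a_incr (S N) K ltac:(lia)); lia]).
    set (n' := (n - a N)%nat).
    destruct (HK N HKN) as [HaN HdN].
    pose proof (IH n' ltac:(unfold n'; pose proof (index_lt_a a a_incr a0 N); lia)) as IHn.
    pose proof (Cmod_esum_block_sub a b alpha a_incr a0 N n ltac:(lia)) as Hblock. fold n' in Hblock.
    assert (En : INR n = INR (a N) + INR n') by (unfold n'; rewrite minus_INR by lia; ring).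
    assert (Hn' : INR n' <= s * INR (a N)).
    { pose proof (a_growth N). assert (INR n < INR (a (S N))) by (apply lt_INR, T2).
      pose proof (pos_INR (a N)). lra. }
    assert (Hdef : defect b alpha N * INR n' <= eps / 2 * INR (a N)).
    { apply Rle_trans with (eps / (2 * s) * (s * INR (a N))).
      - apply Rmult_le_compat; [apply defect_nonneg | apply pos_INR | lra | lra].
      - right. field. lra. }
    replace (ES n - INR n * u)%C with ((ES (a N) - INR (a N) * u) + (ES n' - INR n' * u)
      + (ES n - (ES (a N) + ES n')))%C by (rewrite En, RtoC_plus; ring).
    eapply Rle_trans; [apply Cmod_triangle|].
    eapply Rle_trans; [apply Rplus_le_compat_r, Cmod_triangle|].
    rewrite En. lra.
Qed.

End LinearApprox.

Theorem mainTheorem5 (a : nat -> nat) (b : nat -> Z) (alpha : R) :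
  mild_signature a ->
  ex_series (fun i => dist_int (alpha * IZR (b i))) ->
  exists l : C, filterlim (weyl_sum (replacement a b) alpha) eventually (locally l).
Proof.
  intros [a_incr [a0 [[L HL] [r [s [_ [s_gt1 Hrs]]]]]]] Hdist.
  assert (a_growth : forall n, INR (a (S n)) < s * INR (a n)) by (intros n; apply Hrs).
  assert (Hwindow : forall n, (1 <= n)%nat ->
    forall j, In j (greedy_rep a n (a n) (a n)) -> (n - S L <= j)%nat)
    by (intros n Hn j Hj; specialize (HL n Hn j Hj); lia).
  pose proof (ex_series_defect b alpha Hdist) as Hdefect.
  destruct (block_avgs_converge a b alpha a_incr a0 s s_gt1 a_growth (S L) ltac:(lia) Hwindow Hdefect)
    as [u Hu].
  exists u. apply (filterlim_ext (fun n => RtoC (/ INR n) * esum a b alpha n)%C);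
    [intros n; symmetry; apply weyl_sum_esum|].
  apply lim_of_linear_approx. intros eps Heps.
  destruct (Hu (eps / 2) ltac:(lra)) as [K1 HK1].
  destruct (ex_series_sum_from_small _ (defect_nonneg b alpha) Hdefect (eps / (2 * s)))
    as [K2 HK2]; [apply Rdiv_lt_0_compat; lra|].
  exists ((1 + Cmod u) * INR (a (K1 + K2)%nat)).
  apply (esum_linear_approx a b alpha a_incr a0 s s_gt1 a_growth); [lra|].
  intros N HN. split; [apply HK1; lia|].
  specialize (HK2 N 1%nat ltac:(lia)). simpl in HK2. rewrite Nat.add_0_r in HK2. lra.
Qed.
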